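(* Fix $C<1$. For every $\epsilon>0$ there are positive constants $D$ and $N$ such that \[ \mathbb{P}(\#\mathcal{E}_i\ge\epsilon n)\le D\frac{(\log n)^3}{n^2} \] for all $n\ge N$ and all $1\le i\le n$.
   Context: Let $C>0$ be a constant and $(\alpha_n)_{n\ge1}$ a sequence of nonnegative reals with $\alpha_n\to0$. For each $n$, consider the complete graph $K_n$ on vertex set $\{1,\dots,n\}$; each edge $e$ of $K_n$ is independently open with probability $p_n(e)$ and closed otherwise, where $\frac{C-\alpha_n}{n}\le p_n(e)\le\frac{C+\alpha_n}{n}$ for every edge $e$. Let $G$ be the resulting random graph of open edges, with probability measure $\mathbb{P}$. For a vertex $i$, $\mathcal{E}_i$ denotes the open component of $G$ containing $i$ (the set of vertices joined to $i$ by a path of open edges, together with $i$ itself), and $\#\mathcal{E}_i$ its number of vertices. $\log$ is the natural logarithm. *)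

From HB Require Import structures.
From mathcomp Require Import all_boot all_order all_algebra.
From mathcomp Require Import all_classical all_reals all_analysis.
Set Implicit Arguments. Unset Strict Implicit. Unset Printing Implicit Defensive.
Import Order.TTheory GRing.Theory Num.Theory.
Local Open Scope ring_scope.

Definition edge (n : nat) := {e : {set 'I_n} | #|e| == 2%N}.

(* A configuration assigns to each edge "open" (true) or "closed" (false). *)
Definition config (n : nat) := {ffun edge n -> bool}.

Definition cfg_weight (R : realType) (n : nat) (p : edge n -> R) (w : config n) : R :=
  \prod_(e : edge n) (if w e then p e else 1 - p e).

Definition Prob (R : realType) (n : nat) (p : edge n -> R) (A : pred (config n)) : R :=
  \sum_(w : config n | A w) cfg_weight p w.

Definition open_adjacent (n : nat) (w : config n) : rel 'I_n :=
  fun x y => [exists e : edge n, w e && (val e == [set x; y])].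

Definition open_component (n : nat) (w : config n) (i : 'I_n) : {set 'I_n} :=
  [set y | connect (open_adjacent w) i y].

From HB Require Import structures.
From mathcomp Require Import all_boot all_order all_algebra.
From mathcomp Require Import all_classical all_reals all_analysis.
From mathcomp Require Import zify ring lra.
Import Order.TTheory GRing.Theory Num.Theory.
Set Implicit Arguments. Unset Strict Implicit. Unset Printing Implicit Defensive.
Local Open Scope ring_scope.

(* If j and l both lie in the open component of i, there
   is an open tripod with pairwise distinct vertices: a path from i to some
   centre z, followed by two legs from z ending at j and at l.  So the square of
   the component size is at most the number of open tripods.  A tripod with k
   edges is open with probability at most (c/n)^k and there are at most n^k of
   them, so when every edge is open with probability at most c/n, c < 1, the
   expected number of open tripods is at most (sum_a c^a)^3 <= (1 - c)^-3.
   Markov's inequality for the squared size at level (eps n)^2 then gives a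
   bound of order 1/n^2, and C < 1 yields p <= c/n eventually for
   c = (1 + C)/2. *)

Section PathEdges.
Variable n : nat.

Fixpoint path_edges (x : 'I_n) (s : seq 'I_n) : seq (edge n) :=
  if s is y :: s' then
    if insub [set x; y] is Some e then e :: path_edges y s' else path_edges y s'
  else [::].

Lemma path_edges_sub x s e : e \in path_edges x s -> {subset val e <= x :: s}.
Proof.
elim: s x => [|y s IH] x //=.
have tail v : v \in y :: s -> v \in x :: y :: s by move=> vys; rewrite inE vys orbT.
case: insubP => [e0 _ He0|_]; last by move=> /IH sub v /sub /tail.
rewrite inE => /orP [/eqP -> | /IH sub v /sub /tail //] v.
by rewrite He0 !inE => /orP [->|->]; rewrite ?orbT.
Qed.

Lemma path_edges_meet x s e : e \in path_edges x s -> exists2 v, v \in val e & v \in s.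
Proof.
elim: s x => [|y s IH] x //=.
have tail v : v \in s -> v \in y :: s by move=> vs; rewrite inE vs orbT.
case: insubP => [e0 _ He0|_]; last by move=> /IH [v ve /tail]; exists v.
rewrite inE => /orP [/eqP -> | /IH [v ve /tail]]; last by exists v.
by exists y; rewrite ?He0 !inE eqxx ?orbT.
Qed.

Lemma uniq_path_edges x s : uniq (x :: s) -> uniq (path_edges x s).
Proof.
elim: s x => [|y s IH] x //= /andP [xNys ys_uniq].
case: insubP => [e _ He|_]; last exact: IH.
rewrite /= IH // andbT; apply/negP => /path_edges_sub sub.
by move: xNys; rewrite sub // He !inE eqxx.
Qed.

Lemma size_path_edges x s : uniq (x :: s) -> size (path_edges x s) = size s.
Proof.
elim: s x => [|y s IH] x //= /andP [xNys ys_uniq].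
have xy2 : #|[set x; y]| == 2%N.
  by rewrite cards2; move: xNys; rewrite inE negb_or => /andP [-> _].
by rewrite insubT /= IH.
Qed.

Lemma path_edges_open (w : config n) x s :
  path (open_adjacent w) x s -> all w (path_edges x s).
Proof.
elim: s x => [|y s IH] x //= /andP [/existsP [e /andP [we /eqP ve]] ys_path].
case: insubP => [e0 _ He0|_]; last exact: IH.
by rewrite /= IH // andbT (_ : e0 = e) //; apply: val_inj; rewrite He0 ve.
Qed.

End PathEdges.

Lemma path_last_visit (T : eqType) (e : rel T) (A : pred T) x q :
  A x -> path e x q ->
  exists z zs, [/\ A z, path e z zs, last z zs = last x q,
     all [predC A] zs & subseq zs q].
Proof.
move=> Ax; elim/last_ind: q => [|q y IH]; first by exists x, [::].
rewrite rcons_path => /andP [/IH [z [zs [Az zs_path zs_last zsNA zs_sub]]] ey].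
case Ay: (A y); first by exists y, [::]; rewrite last_rcons sub0seq.
exists z, (rcons zs y); split=> //.
- by rewrite rcons_path zs_path zs_last.
- by rewrite !last_rcons.
- by rewrite all_rcons zsNA andbT; apply/negbT.
- by rewrite -!cats1 cat_subseq.
Qed.

Section Tripods.
Variables (n : nat) (i : 'I_n).

(* The tripod (xs, ys, zs) rooted at i consists of the path i :: xs to the
   centre [last i xs] and of the two legs ys and zs leaving the centre. *)
Definition tripod_edges (xs ys zs : seq 'I_n) : seq (edge n) :=
  path_edges i (xs ++ ys) ++ path_edges (last i xs) zs.

Definition tripod_ends (xs ys zs : seq 'I_n) : 'I_n * 'I_n :=
  (last (last i xs) ys, last (last i xs) zs).

Definition open_tripod (w : config n) (xs ys zs : seq 'I_n) : bool :=
  uniq (i :: xs ++ ys ++ zs) && all w (tripod_edges xs ys zs).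

Section UniqTripod.
Variables xs ys zs : seq 'I_n.
Hypothesis tripod_uniq : uniq (i :: xs ++ ys ++ zs).

Let stem_uniq : uniq ((i :: xs ++ ys) ++ zs).
Proof. by rewrite cat_cons -catA. Qed.

Let leg_disjoint v : v \in zs -> v \notin i :: xs ++ ys.
Proof. by move: stem_uniq; rewrite cat_uniq => /and3P [_ /hasPn disj _] /disj. Qed.

Let leg_uniq : uniq (last i xs :: zs).
Proof.
rewrite /=; move: stem_uniq; rewrite cat_uniq => /and3P [_ _ ->]; rewrite andbT.
apply/negP => /leg_disjoint; rewrite inE mem_cat.
by have := mem_last i xs; rewrite inE => /orP [->|->]; rewrite ?orbT.
Qed.

Lemma uniq_tripod_edges : uniq (tripod_edges xs ys zs).
Proof.
move: stem_uniq; rewrite cat_uniq => /andP [stem _].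
rewrite /tripod_edges cat_uniq !uniq_path_edges // andbT.
apply/hasPn => e /path_edges_meet [v ve vzs].
by apply/negP => /path_edges_sub /(_ v ve); apply/negP/leg_disjoint.
Qed.

Lemma size_tripod_edges : size (tripod_edges xs ys zs) = (size xs + size ys + size zs)%N.
Proof.
move: stem_uniq; rewrite cat_uniq => /andP [stem _].
by rewrite size_cat !size_path_edges // size_cat.
Qed.

End UniqTripod.

Lemma exists_open_tripod w j l :
  j \in open_component w i -> l \in open_component w i ->
  exists xs ys zs, open_tripod w xs ys zs && (tripod_ends xs ys zs == (j, l)).
Proof.
rewrite !inE => /connectP [s0 /shortenP [s s_path s_uniq _] ->].
move=> /connectP [t0 /shortenP [t t_path /andP [_ t_uniq] _] ->].
have [z [zs [zs_in zs_path zs_last zsNs zs_sub]]] :=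
  path_last_visit (mem_head i s : mem (i :: s) i) t_path.
move: s_path s_uniq zsNs.
case/splitPl: zs_in => xs ys xs_last s_path s_uniq zsNs.
have tripod_uniq : uniq (i :: xs ++ ys ++ zs).
  rewrite catA -cat_cons cat_uniq s_uniq (subseq_uniq zs_sub t_uniq).
  by rewrite andbT; apply/hasPn => v /(allP zsNs).
exists xs, ys, zs; rewrite /open_tripod /tripod_ends tripod_uniq xs_last zs_last last_cat.
by rewrite /tripod_edges all_cat path_edges_open // xs_last path_edges_open // eqxx.
Qed.

Definition short_seq := {a : 'I_n & a.-tuple 'I_n}.

Definition tripod := (short_seq * short_seq * short_seq)%type.

Definition open_tripods (w : config n) : {set tripod} :=
  [set t : tripod | open_tripod w (tagged t.1.1) (tagged t.1.2) (tagged t.2)].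

Lemma card_component_sq_le w : (#|open_component w i| ^ 2 <= #|open_tripods w|)%N.
Proof.
pose ends (t : tripod) := tripod_ends (tagged t.1.1) (tagged t.1.2) (tagged t.2).
rewrite expnS expn1 -cardsX; apply: leq_trans (leq_imset_card ends _); apply: subset_leq_card.
apply/fintype.subsetP => -[j l] /finset.setXP [jC lC].
have [xs [ys [zs /andP [open_t /eqP <-]]]] := exists_open_tripod jC lC.
have := max_card (mem (i :: xs ++ ys ++ zs)).
rewrite (card_uniqP (proj1 (andP open_t))) card_ord /= !size_cat => size_le.
have xs_lt : (size xs < n)%N by lia.
have ys_lt : (size ys < n)%N by lia.
have zs_lt : (size zs < n)%N by lia.
pose short s (s_lt : (size s < n)%N) : short_seq := Tagged _ (in_tuple s : (Ordinal s_lt).-tuple _).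
apply/imsetP; exists (short xs xs_lt, short ys ys_lt, short zs zs_lt) => //.
by rewrite inE.
Qed.

End Tripods.

Section Expectation.
Variables (R : realType) (n : nat) (p : edge n -> R).

Definition Expect (X : config n -> R) : R :=
  \sum_(w : config n) cfg_weight p w * X w.

Lemma Expect_card (T : finType) (A : config n -> {set T}) :
  Expect (fun w => #|A w|%:R) = \sum_(t : T) Prob p [pred w | t \in A w].
Proof.
rewrite /Expect /Prob.
transitivity (\sum_w \sum_(t : T) (if t \in A w then cfg_weight p w else 0)).
  apply: eq_bigr => w _; rewrite -sum1_card natr_sum mulr_sumr big_mkcond /=.
  by apply: eq_bigr => t _; case: (t \in A w); rewrite ?mulr1 ?mulr0.
by rewrite exchange_big; apply: eq_bigr => t _; rewrite [RHS]big_mkcond.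
Qed.

Lemma Prob_all_open (L : seq (edge n)) :
  uniq L -> Prob p [pred w : config n | all w L] = \prod_(e <- L) p e.
Proof.
move=> L_uniq.
pose F e b : R := if b then p e else 1 - p e.
rewrite /Prob.
transitivity (\sum_(w in family (fun e => [pred b | (e \in L) ==> b])) \prod_e F e (w e)).
  apply: eq_bigl => w; rewrite inE; apply/allP/familyP => [allw e|allw e eL].
    by rewrite inE; apply/implyP => /allw.
  by move: (allw e); rewrite inE eL.
rewrite -bigA_distr_big_dep (big_uniq L) // [RHS]big_mkcond; apply: eq_bigr => e _.
by rewrite big_mkcond big_bool /F; case: (e \in L); rewrite /= ?addr0 // addrC subrK.
Qed.

Hypothesis p01 : forall e, 0 <= p e <= 1.

Lemma cfg_weight_ge0 w : 0 <= cfg_weight p w.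
Proof.
by apply: prodr_ge0 => e _; have /andP [p0 p1] := p01 e; case: (w e); rewrite ?subr_ge0.
Qed.

Lemma ler_Expect (X Y : config n -> R) :
  (forall w, X w <= Y w) -> Expect X <= Expect Y.
Proof. by move=> XY; apply: ler_sum => w _; rewrite ler_wpM2l ?cfg_weight_ge0. Qed.

Lemma markov_ineq (X : config n -> R) (K : R) :
  0 < K -> (forall w, 0 <= X w) -> Prob p [pred w | K <= X w] <= Expect X / K.
Proof.
move=> K0 X0; rewrite /Prob /Expect big_mkcond mulr_suml; apply: ler_sum => w _ /=.
have w0 := cfg_weight_ge0 w.
case: ifP => KX; first by rewrite -mulrA ler_peMr // ler_pdivlMr // mul1r.
by rewrite divr_ge0 ?mulr_ge0 ?X0 // ltW.
Qed.

End Expectation.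

Section TripodSums.
Variables (R : comPzRingType) (n : nat).

Lemma sum_short_seq (x : R) :
  \sum_(s : short_seq n) x ^+ tag s = \sum_(a < n) (x * n%:R) ^+ a.
Proof.
rewrite -(sig_big_dep xpredT (fun _ => xpredT) (fun (a : 'I_n) (_ : a.-tuple 'I_n) => x ^+ a)) /=.
by apply: eq_bigr => a _; rewrite sumr_const card_tuple card_ord exprMn -natrX mulr_natr.
Qed.

Lemma sum_tripod (F : short_seq n -> R) :
  \sum_(t : tripod n) F t.1.1 * F t.1.2 * F t.2 = (\sum_s F s) ^+ 3.
Proof.
rewrite -(pair_bigA _ (fun ab c => F ab.1 * F ab.2 * F c)).
rewrite -(pair_bigA _ (fun a b => \sum_c F a * F b * F c)) /=.
rewrite !exprS expr0 mulr1 mulr_suml; apply: eq_bigr => a _.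
rewrite mulr_suml mulr_sumr; apply: eq_bigr => b _.
by rewrite mulr_sumr mulr_sumr; apply: eq_bigr => c _; rewrite mulrA.
Qed.

End TripodSums.

Lemma geometric_sum_le (R : realFieldType) (c : R) m :
  0 <= c < 1 -> \sum_(a < m) c ^+ a <= (1 - c)^-1.
Proof.
move=> /andP [c0 c1]; have c1_gt0 : 0 < 1 - c by rewrite subr_gt0.
have -> : \sum_(a < m) c ^+ a = (1 - c ^+ m) / (1 - c).
  by rewrite -opprB subrX1 -mulNr opprB mulrAC divff ?gt_eqF ?mul1r.
by rewrite -[X in _ <= X]mul1r ler_pM2r ?invr_gt0 // lerBlDr lerDl exprn_ge0.
Qed.

Section TripodProbability.
Variables (R : realType) (n : nat) (p : edge n -> R) (q : R).
Hypotheses (q_ge0 : 0 <= q) (p_le : forall e, 0 <= p e <= q).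

Lemma prodr_le_expr (L : seq (edge n)) : \prod_(e <- L) p e <= q ^+ size L.
Proof.
elim: L => [|e L IH]; first by rewrite big_nil.
have /andP [pe0 peq] := p_le e.
by rewrite big_cons exprS ler_pM // prodr_ge0 // => e' _; case/andP: (p_le e').
Qed.

Lemma Prob_open_tripod_le (i : 'I_n) xs ys zs :
  Prob p [pred w | open_tripod i w xs ys zs] <= q ^+ (size xs + size ys + size zs).
Proof.
have [tripod_uniq|not_uniq] := boolP (uniq (i :: xs ++ ys ++ zs)); last first.
  by rewrite /Prob big_pred0 ?exprn_ge0 // => w; rewrite /= /open_tripod (negbTE not_uniq).
have -> : Prob p [pred w | open_tripod i w xs ys zs]
          = Prob p [pred w : config n | all w (tripod_edges i xs ys zs)].
  by apply: eq_bigl => w; rewrite /= /open_tripod tripod_uniq.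
rewrite Prob_all_open ?uniq_tripod_edges // -(size_tripod_edges tripod_uniq).
exact: prodr_le_expr.
Qed.

End TripodProbability.

Section SubcriticalComponent.
Variables (R : realType) (n : nat) (p : edge n -> R) (c : R) (i : 'I_n).
Hypotheses (c01 : 0 <= c < 1) (p_le : forall e, 0 <= p e <= c / n%:R).

Let n_gt0 : (0 < n)%N. Proof. exact: leq_ltn_trans (ltn_ord i). Qed.

Let q_ge0 : 0 <= c / n%:R.
Proof. by case/andP: c01 => c0 _; rewrite divr_ge0. Qed.

Let p01 e : 0 <= p e <= 1.
Proof.
case/andP: (p_le e) c01 => -> pc /andP [_ c1]; apply: le_trans pc _.
by rewrite ler_pdivrMr ?ltr0n // mul1r (le_trans (ltW c1)) // ler1n.
Qed.

Lemma expected_open_tripods_le :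
  Expect p (fun w => #|open_tripods i w|%:R) <= (1 - c) ^- 3.
Proof.
rewrite Expect_card.
pose f (s : short_seq n) := (c / n%:R) ^+ tag s.
apply: (@le_trans _ _ (\sum_(t : tripod n) f t.1.1 * f t.1.2 * f t.2)).
  apply: ler_sum => t _.
  have -> : Prob p [pred w | t \in open_tripods i w]
            = Prob p [pred w | open_tripod i w (tagged t.1.1) (tagged t.1.2) (tagged t.2)].
    by apply: eq_bigl => w; rewrite /= inE.
  apply: le_trans (Prob_open_tripod_le q_ge0 p_le _ _ _ _) _.
  by rewrite !size_tuple /f -!exprD.
rewrite sum_tripod sum_short_seq divfK ?pnatr_eq0 -?lt0n // -exprVn.
rewrite lerXn2r ?nnegrE ?sumr_ge0 ?invr_ge0 ?subr_ge0 ?geometric_sum_le //.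
- by move=> a _; rewrite exprn_ge0 //; case/andP: c01.
- by case/andP: c01 => _ /ltW.
Qed.

Lemma component_tail_le K : 0 < K ->
  Prob p [pred w | K <= #|open_component w i|%:R] <= (1 - c) ^- 3 / K ^+ 2.
Proof.
move=> K0.
have -> : Prob p [pred w | K <= #|open_component w i|%:R]
          = Prob p [pred w | K ^+ 2 <= (#|open_component w i| ^ 2)%:R].
  by apply: eq_bigl => w; rewrite /= natrX ler_pXn2r // nnegrE ?ler0n ?ltW.
apply: le_trans (markov_ineq p01 (exprn_gt0 2 K0) (fun w => ler0n _ _)) _.
apply: ler_wpM2r; first by rewrite invr_ge0 exprn_ge0 // ltW.
apply: le_trans expected_open_tripods_le.
by apply: ler_Expect => // w; rewrite ler_nat card_component_sq_le.
Qed.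

End SubcriticalComponent.

Local Open Scope classical_set_scope.
Local Open Scope ring_scope.

Lemma edge_prob_eventually_le (R : realType) (C c : R) (alpha : nat -> R)
    (p : forall n : nat, edge n -> R) :
  C < c -> alpha n @[n --> \oo] --> (0 : R^o) ->
  (forall n (e : edge n), 0 <= p n e <= (C + alpha n) / n%:R) ->
  exists N, forall n, (N <= n)%N -> forall e, 0 <= p n e <= c / n%:R.
Proof.
move=> Cc alpha_cvg p_le; rewrite -subr_gt0 in Cc.
have [N _ alpha_near] := (cvgrPdist_lt _ _).1 alpha_cvg _ Cc.
exists N => n Nn e; case/andP: (p_le n e) => -> /le_trans; apply.
rewrite ler_wpM2r ?invr_ge0 ?ler0n // -lerBrDl ltW //.
by apply: le_lt_trans (alpha_near n Nn); rewrite /= sub0r normrN ler_norm.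
Qed.

Lemma ln_nat_cube_ratio_ge1 (R : realType) n :
  (2 <= n)%N -> 1 <= ln (n%:R : R) ^+ 3 / ln 2 ^+ 3.
Proof.
move=> n2; have ln2_gt0 : 0 < ln (2 : R) by rewrite ln_gt0 // ltr1n.
have ln2_le : ln (2 : R) <= ln n%:R by rewrite ler_ln ?posrE ?ler_nat ?ltr0n //; lia.
rewrite ler_pdivlMr ?exprn_gt0 // mul1r lerXn2r // nnegrE ltW //.
exact: lt_le_trans ln2_le.
Qed.

Unset Implicit Arguments.

Theorem lemma7 (R : realType) (C : R) (alpha : nat -> R)
  (p : forall n : nat, edge n -> R) :
  0 < C -> C < 1 ->
  (forall n, 0 <= alpha n) -> alpha n @[n --> \oo] --> (0 : R^o) ->
  (forall n (e : edge n), 0 <= p n e <= 1) ->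
  (forall n (e : edge n),
      (C - alpha n) / n%:R <= p n e <= (C + alpha n) / n%:R) ->
  forall eps : R, 0 < eps ->
  exists D : R, exists N : nat, 0 < D /\ (0 < N)%N /\
    forall n : nat, (N <= n)%N -> forall i : 'I_n,
      Prob (p n) [pred w : config n | eps * n%:R <= #|open_component w i|%:R]
        <= D * (ln (n%:R : R)) ^+ 3 / (n%:R ^+ 2).
Proof.
move=> C_gt0 C_lt1 _ alpha_cvg p01 p_bounds eps eps_gt0.
pose c := (1 + C) / 2.
have c01 : 0 <= c < 1 by apply/andP; split; rewrite /c; lra.
have [N p_le] : exists N, forall n, (N <= n)%N -> forall e, 0 <= p n e <= c / n%:R.
  apply: (edge_prob_eventually_le (C := C)) alpha_cvg _ => [|n e]; first by rewrite /c; lra.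
  by case/andP: (p01 n e) => ->; case/andP: (p_bounds n e).
pose B := (1 - c) ^- 3.
have B_gt0 : 0 < B by rewrite invr_gt0 exprn_gt0 // subr_gt0; case/andP: c01.
have ln2_gt0 : 0 < ln (2 : R) by rewrite ln_gt0 // ltr1n.
exists (B / (eps ^+ 2 * ln 2 ^+ 3)), (maxn N 2).
split; first by rewrite divr_gt0 // mulr_gt0 // exprn_gt0.
split=> [|n]; first by rewrite leq_max orbT.
rewrite geq_max => /andP [Nn n2] i.
have n_gt0 : 0 < (n%:R : R) by rewrite ltr0n; lia.
apply: le_trans (component_tail_le i c01 (p_le n Nn) (mulr_gt0 eps_gt0 n_gt0)) _.
have -> : B / (eps ^+ 2 * ln 2 ^+ 3) * ln n%:R ^+ 3 / n%:R ^+ 2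
          = B / (eps * n%:R) ^+ 2 * (ln n%:R ^+ 3 / ln 2 ^+ 3).
  by field; rewrite !gt_eqF ?exprn_gt0.
apply: ler_peMr (ln_nat_cube_ratio_ge1 R n2).
by rewrite divr_ge0 ?exprn_ge0 // ?ltW // mulr_gt0.
Qed.
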